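(* Let $P\in\mathbb{N}_0^{n\times n}$ be an incidence matrix that exclusively represents irreducible morphisms (resp. exclusively represents reducible morphisms), and let $1\leq i,j\leq n$. Then the matrix obtained from $P$ by swapping its $i$-th and $j$-th rows, and the matrix obtained from $P$ by swapping its $i$-th and $j$-th columns, also exclusively represent irreducible morphisms (resp. reducible morphisms).
   Context: Let $\Sigma=\{a_1,\dots,a_n\}$. A morphism $\varphi:\Sigma^+\to\Sigma^+$ (non-empty images) is Parikh-positive if every letter occurs in $\varphi(a_1)\cdots\varphi(a_n)$. Its incidence matrix is $P(\varphi)=(m_{i,j})$ with $m_{i,j}=|\varphi(a_j)|_{a_i}$. An incidence matrix is any square non-negative integer matrix; throughout, the incidence matrices considered have no zero rows or columns. An automorphism is an injective morphism mapping each letter to a single letter; a morphism is reducible if it equals $\psi_2\circ\psi_1$ with neither $\psi_1,\psi_2$ an automorphism, irreducible otherwise. An incidence matrix $P$ exclusively represents irreducible (resp. reducible) morphisms if every Parikh-positive morphism $\varphi$ with $P(\varphi)=P$ is irreducible (resp. reducible). *)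

From mathcomp Require Import all_boot all_algebra.
Set Implicit Arguments. Unset Strict Implicit. Unset Printing Implicit Defensive.

(* Alphabet Sigma = {a_1,...,a_n} is represented by 'I_n; letter a_k is the
   ordinal k-1.  A morphism Sigma^+ -> Sigma^+ is determined by the images of
   the letters; we represent it by its letter map 'I_n -> seq 'I_n, and require
   non-empty images (nonerasing). *)
Definition morph (n : nat) := 'I_n -> seq 'I_n.

Definition nonerasing n (phi : morph n) : Prop := forall a, phi a != [::].

Definition morph_word n (phi : morph n) (w : seq 'I_n) : seq 'I_n :=
  flatten (map phi w).

Definition morph_comp n (psi2 psi1 : morph n) : morph n :=
  fun a => morph_word psi2 (psi1 a).

Definition parikh_positive n (phi : morph n) : Prop :=
  forall b : 'I_n, b \in flatten [seq phi a | a <- enum 'I_n].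

Definition incidence n (phi : morph n) : 'M[nat]_n :=
  \matrix_(i < n, j < n) count_mem i (phi j).

Definition automorphism n (phi : morph n) : Prop :=
  (exists f : 'I_n -> 'I_n, injective f /\ forall a, phi a = [:: f a]).

Definition reducible n (phi : morph n) : Prop :=
  exists psi1 psi2 : morph n,
    [/\ nonerasing psi1, nonerasing psi2,
        ~ automorphism psi1, ~ automorphism psi2 &
        forall a, phi a = morph_comp psi2 psi1 a].

Definition irreducible n (phi : morph n) : Prop := ~ reducible phi.

Definition excl_irreducible n (P : 'M[nat]_n) : Prop :=
  forall phi : morph n, nonerasing phi -> parikh_positive phi ->
    incidence phi = P -> irreducible phi.

Definition excl_reducible n (P : 'M[nat]_n) : Prop :=
  forall phi : morph n, nonerasing phi -> parikh_positive phi ->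
    incidence phi = P -> reducible phi.

Definition no_zero_row_col n (P : 'M[nat]_n) : Prop :=
  (forall i, exists j, P i j != 0%N) /\ (forall j, exists i, P i j != 0%N).

From mathcomp Require Import all_boot all_algebra.
From mathcomp Require Import fingroup perm.
Set Implicit Arguments. Unset Strict Implicit. Unset Printing Implicit Defensive.
Local Open Scope group_scope.

(* Swapping two rows (columns) of P amounts to renaming two letters in the
   images (arguments) of the morphisms. Renaming letters by a permutation s is
   a bijection on morphisms which preserves non-erasure, Parikh-positivity and
   reducibility (a factorisation psi2 o psi1 of phi yields the factorisation
   (s o psi2) o psi1 of s o phi, resp. psi2 o (psi1 o s) of phi o s, and the
   factors stay non-automorphisms), while it permutes the rows (columns) of the
   incidence matrix accordingly. *)

Section Relabel.

Variable n : nat.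
Implicit Types (phi psi : morph n) (s : {perm 'I_n}).

Definition relabel_img (f : 'I_n -> 'I_n) phi : morph n := fun a => map f (phi a).
Definition relabel_dom (f : 'I_n -> 'I_n) phi : morph n := fun a => phi (f a).

Lemma eq_reducible phi psi : phi =1 psi -> reducible phi -> reducible psi.
Proof.
by move=> eq_phi [psi1 [psi2 [ne1 ne2 aut1 aut2 def_phi]]]; exists psi1, psi2;
  split=> // a; rewrite -eq_phi.
Qed.

Lemma parikh_positiveP phi :
  parikh_positive phi <-> forall b, exists a, b \in phi a.
Proof.
split=> [pp b | occ b].
  by have /flattenP[_ /mapP[a _ ->] b_in] := pp b; exists a.
have [a b_in] := occ b.
by apply/flattenP; exists (phi a) => //; apply: map_f; rewrite mem_enum.
Qed.

Lemma nonerasing_relabel_img f phi :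
  nonerasing phi -> nonerasing (relabel_img f phi).
Proof. by move=> ne a; rewrite /relabel_img; case: (phi a) (ne a). Qed.

Lemma nonerasing_relabel_dom f phi :
  nonerasing phi -> nonerasing (relabel_dom f phi).
Proof. by move=> ne a; apply: ne. Qed.

Lemma parikh_positive_relabel_img s phi :
  parikh_positive phi -> parikh_positive (relabel_img s phi).
Proof.
move=> /parikh_positiveP occ; apply/parikh_positiveP => b.
have [a b_in] := occ (s^-1 b); exists a.
by rewrite -[b](permKV s); apply: map_f.
Qed.

Lemma parikh_positive_relabel_dom s phi :
  parikh_positive phi -> parikh_positive (relabel_dom s phi).
Proof.
move=> /parikh_positiveP occ; apply/parikh_positiveP => b.
by have [a b_in] := occ b; exists (s^-1 a); rewrite /relabel_dom permKV.
Qed.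

Lemma incidence_relabel_img s phi :
  incidence (relabel_img s phi) = row_perm s^-1 (incidence phi).
Proof.
apply/matrixP => i j; rewrite !mxE count_map; apply: eq_count => x /=.
by rewrite -(inj_eq (@perm_inj _ s^-1)) permK.
Qed.

Lemma incidence_relabel_dom s phi :
  incidence (relabel_dom s phi) = col_perm s (incidence phi).
Proof. by apply/matrixP => i j; rewrite !mxE. Qed.

Lemma relabel_imgK s phi : relabel_img s^-1 (relabel_img s phi) =1 phi.
Proof. by move=> a; rewrite /relabel_img -map_comp (eq_map (permK s)) map_id. Qed.

Lemma relabel_domK s phi : relabel_dom s (relabel_dom s^-1 phi) =1 phi.
Proof. by move=> a; rewrite /relabel_dom permK. Qed.

(* No injectivity of f is needed: if f o psi is letter-to-letter, so is psi,
   and injectivity of the letter map of f o psi forces that of psi. *)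
Lemma automorphism_relabel_img f psi :
  automorphism (relabel_img f psi) -> automorphism psi.
Proof.
move=> [g [g_inj def_g]].
have psi1 a : psi a = [:: head a (psi a)] /\ g a = f (head a (psi a)).
  by move: (def_g a); rewrite /relabel_img; case: (psi a) => [|x [|? ?]] // [].
exists (fun a => head a (psi a)); split=> [x y eq_xy | a]; last by case: (psi1 a).
by apply: g_inj; rewrite (proj2 (psi1 x)) (proj2 (psi1 y)) eq_xy.
Qed.

Lemma automorphism_relabel_dom s psi :
  automorphism (relabel_dom s psi) -> automorphism psi.
Proof.
move=> [g [g_inj def_g]]; exists (g \o s^-1); split.
  by apply: inj_comp => //; apply: perm_inj.
by move=> a; rewrite -def_g /relabel_dom permKV.
Qed.

Lemma reducible_relabel_img f phi :
  reducible phi -> reducible (relabel_img f phi).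
Proof.
move=> [psi1 [psi2 [ne1 ne2 aut1 aut2 def_phi]]].
exists psi1, (relabel_img f psi2); split=> //.
- exact: nonerasing_relabel_img.
- by move/automorphism_relabel_img.
- by move=> a; rewrite /relabel_img def_phi /morph_comp /morph_word
    map_flatten -map_comp.
Qed.

Lemma reducible_relabel_dom s phi :
  reducible phi -> reducible (relabel_dom s phi).
Proof.
move=> [psi1 [psi2 [ne1 ne2 aut1 aut2 def_phi]]].
exists (relabel_dom s psi1), psi2; split=> //.
- exact: nonerasing_relabel_dom.
- by move/automorphism_relabel_dom.
- by move=> a; rewrite /relabel_dom def_phi.
Qed.

Lemma excl_transfer (T : morph n -> morph n) (P Q : 'M[nat]_n) :
    (forall phi, nonerasing phi -> nonerasing (T phi)) ->
    (forall phi, parikh_positive phi -> parikh_positive (T phi)) ->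
    (forall phi, incidence phi = Q -> incidence (T phi) = P) ->
    (forall phi, reducible phi <-> reducible (T phi)) ->
  (excl_irreducible P -> excl_irreducible Q) /\
  (excl_reducible P -> excl_reducible Q).
Proof.
move=> neT ppT incT redT; split=> excl phi ne pp inc_phi.
  by move/redT; apply: excl; [exact: neT | exact: ppT | exact: incT].
by apply/redT/excl; [exact: neT | exact: ppT | exact: incT].
Qed.

Lemma excl_row_perm s (P : 'M[nat]_n) :
  (excl_irreducible P -> excl_irreducible (row_perm s P)) /\
  (excl_reducible P -> excl_reducible (row_perm s P)).
Proof.
apply: (excl_transfer (T := relabel_img s)).
- exact: nonerasing_relabel_img.
- exact: parikh_positive_relabel_img.
- by move=> phi inc_phi; rewrite incidence_relabel_img inc_phi -row_permM mulVg
    row_perm1.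
- split; first exact: reducible_relabel_img.
  by move/(reducible_relabel_img s^-1)/eq_reducible; apply; apply: relabel_imgK.
Qed.

Lemma excl_col_perm s (P : 'M[nat]_n) :
  (excl_irreducible P -> excl_irreducible (col_perm s P)) /\
  (excl_reducible P -> excl_reducible (col_perm s P)).
Proof.
apply: (excl_transfer (T := relabel_dom s^-1)).
- exact: nonerasing_relabel_dom.
- exact: parikh_positive_relabel_dom.
- by move=> phi inc_phi; rewrite incidence_relabel_dom inc_phi -col_permM mulVg
    col_perm1.
- split; first exact: reducible_relabel_dom.
  by move/(reducible_relabel_dom s)/eq_reducible; apply; apply: relabel_domK.
Qed.

End Relabel.

Theorem proposition18 (n : nat) (P : 'M[nat]_n) (i j : 'I_n) :
  no_zero_row_col P ->
  (excl_irreducible P ->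
     excl_irreducible (xrow i j P) /\ excl_irreducible (xcol i j P)) /\
  (excl_reducible P ->
     excl_reducible (xrow i j P) /\ excl_reducible (xcol i j P)).
Proof.
move=> _.
have [irr_row red_row] := excl_row_perm (tperm i j) P.
have [irr_col red_col] := excl_col_perm (tperm i j) P.
by split=> excl; split; [apply: irr_row | apply: irr_col
                        | apply: red_row | apply: red_col].
Qed.
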